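(* Every (fork, dart)-free graph $G$ satisfies $\chi(G)\le \omega(G)^2$.
   Context: All graphs are finite and simple; $\chi$ is chromatic number, $\omega$ clique number. The fork is obtained from $K_{1,3}$ by subdividing one edge once. The dart is the graph on $v_1,\dots,v_5$ where $v_1$ is adjacent to $v_2,v_3,v_4$, the set $\{v_2,v_3,v_4\}$ is stable, and $v_5$ is adjacent to $v_1,v_3,v_4$ but not to $v_2$. $G$ is $(H_1,H_2)$-free if it has no induced subgraph isomorphic to $H_1$ or $H_2$. *)

From mathcomp Require Import all_boot.
Set Implicit Arguments. Unset Strict Implicit. Unset Printing Implicit Defensive.

Definition simple_graph (T : finType) (E : rel T) : Prop :=
  symmetric E /\ irreflexive E.

Definition induced_sub (U : finType) (F : rel U) (T : finType) (E : rel T) : Prop :=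
  exists f : U -> T, injective f /\ forall x y, E (f x) (f y) = F x y.

(* Fork: vertices 0..4; 0 = centre of K_{1,3} with leaves 1,2,3;
   the edge 0-3 is subdivided by vertex 4.  Edges: 01 02 04 43. *)
Definition fork_edges : seq (nat * nat) := [:: (0,1); (0,2); (0,4); (4,3)].
(* Dart on v1..v5 (here 0..4): v1~v2,v3,v4 ; v5~v1,v3,v4. *)
Definition dart_edges : seq (nat * nat) :=
  [:: (0,1); (0,2); (0,3); (4,0); (4,2); (4,3)].

Definition rel_of_edges (es : seq (nat * nat)) : rel 'I_5 :=
  fun x y => ((val x, val y) \in es) || ((val y, val x) \in es).

Definition fork : rel 'I_5 := rel_of_edges fork_edges.
Definition dart : rel 'I_5 := rel_of_edges dart_edges.

Definition H_free (U : finType) (F : rel U) (T : finType) (E : rel T) : Prop :=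
  ~ induced_sub F E.

Definition colorable (T : finType) (E : rel T) (k : nat) : bool :=
  [exists c : {ffun T -> 'I_k}, [forall x, forall y, E x y ==> (c x != c y)]].

Lemma colorable_card (T : finType) (E : rel T) :
  irreflexive E -> exists k, colorable E k.
Proof.
move=> irr; exists #|T|; apply/existsP; exists [ffun x => enum_rank x].
apply/forallP => x; apply/forallP => y; apply/implyP => Exy; rewrite !ffunE.
apply/negP => /eqP /enum_rank_inj eq_xy; by move: Exy; rewrite eq_xy irr.
Qed.

Definition chi (T : finType) (E : rel T) (irr : irreflexive E) : nat :=
  ex_minn (colorable_card irr).

Definition clique (T : finType) (E : rel T) (A : {set T}) : bool :=
  [forall x in A, forall y in A, (x != y) ==> E x y].

Definition omega (T : finType) (E : rel T) : nat :=
  \max_(A : {set T} | clique E A) #|A|.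

From mathcomp Require Import all_boot zify.
Set Implicit Arguments. Unset Strict Implicit. Unset Printing Implicit Defensive.

(* We show by induction on |S| that every vertex set S can be properly coloured
   with omega(S)^2 colours, omega(S) being the clique number of G[S].  Three
   reductions (section Colouring) drive the induction:
   - a vertex whose neighbourhood has no stable triple has fewer than omega^2
     neighbours (a Ramsey-type bound), so it can be coloured last;
   - a union of components is coloured independently of the rest;
   - a cluster B (disjoint union of cliques) whose removal lowers the clique
     number takes omega fresh colours on top of (omega - 1)^2 colours.
   The decomposition theorem (section Decomposition) shows that one of the last
   two reductions applies when every vertex has a stable triple {a, b, c} in its
   neighbourhood, by sorting the vertices around such a triple.  Its proof uses
   six small forbidden configurations, each forcing an induced fork or dart
   (section ForbiddenConfigurations). *)

(* A literal (i, j, b) over indexed vertices records "i and j are adjacent iff b". *)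
Definition lit := (nat * nat * bool)%type.

(* Partial knowledge of the adjacency between indexed vertices. *)
Definition table := nat -> nat -> option bool.

Definition table_of (ls : seq lit) : table := fun i j =>
  if ((i, j, true) \in ls) || ((j, i, true) \in ls) then Some true
  else if ((i, j, false) \in ls) || ((j, i, false) \in ls) then Some false
  else None.

Definition assign (K : table) (i j : nat) (b : bool) : table := fun x y =>
  if ((x == i) && (y == j)) || ((x == j) && (y == i)) then Some b else K x y.

Definition edge (es : seq (nat * nat)) (p q : nat) : bool := ((p, q) \in es) || ((q, p) \in es).

Section Certificates.
Variables (n : nat) (dif : seq (nat * nat)) (cls : seq (seq lit)).

(* Tabulate K on [0, n)^2 so that lookups do not replay the history of assignments. *)
Definition memo (K : table) : table :=
  let M := [seq [seq K i j | j <- iota 0 n] | i <- iota 0 n] in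
  fun i j => if (i < n) && (j < n) then nth None (nth [::] M i) j else K i j.

Lemma memoE K i j : memo K i j = K i j.
Proof.
rewrite /memo; case: ifP => // /andP[lt_in lt_jn].
by rewrite (nth_map 0) ?size_iota // nth_iota // (nth_map 0) ?size_iota // nth_iota.
Qed.

(* Vertices i and j are known to be distinct: declared so, adjacent, or
   told apart by a third vertex. *)
Definition separated (K : table) (i j : nat) : bool :=
  [|| (i, j) \in dif, (j, i) \in dif, K i j == Some true |
      has (fun k => [&& K i k != None, K j k != None & K i k != K j k]) (iota 0 n)].

Definition copy_at (K : table) (es : seq (nat * nat)) (g : seq nat) : bool :=
  all (fun p => all (fun q =>
    if p == q then ~~ edge es p q
    else (K (nth 0 g p) (nth 0 g q) == Some (edge es p q)) && separated K (nth 0 g p) (nth 0 g q))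
    (iota 0 5)) (iota 0 5).

Definition clash (K : table) : bool :=
  has (all (fun l => K l.1.1 l.1.2 == Some (~~ l.2))) cls.

(* The search below only proposes certificates, which refute_from rechecks with
   copy_at and clash; it needs no correctness proof and is written for speed:
   it avoids generic equality tests, and uses [if] where the eager [&&] of the
   evaluator would do useless work. *)

Definition pattern (b : bool) : seq (nat * nat) := if b then fork_edges else dart_edges.

(* Fast versions of [o == Some b], [o == None] and [edge]. *)
Definition known_as (o : option bool) (b : bool) : bool :=
  if o is Some c then (if c then b else ~~ b) else false.
Definition unknown (o : option bool) : bool := if o is None then true else false.
Definition fast_edge (es : seq (nat * nat)) (p q : nat) : bool :=
  has (fun e => (eqn e.1 p && eqn e.2 q) || (eqn e.1 q && eqn e.2 p)) es.

Definition extends (es : seq (nat * nat)) (K : table) (pre : seq nat) (x : nat) : bool :=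
  ~~ has (eqn x) pre &&
  all (fun p => ~~ known_as (K (nth 0 pre p) x) (~~ fast_edge es p (size pre))) (iota 0 (size pre)).

Fixpoint placements (es : seq (nat * nat)) (K : table) (k : nat) (pre : seq nat) :
    seq (seq nat) :=
  if k is k'.+1 then
    flatten [seq placements es K k' (rcons pre x) | x <- iota 0 n & extends es K pre x]
  else [:: pre].

Definition pair_lits (es : seq (nat * nat)) (g : seq nat) : seq lit :=
  [seq (nth 0 g pq.1, nth 0 g pq.2, fast_edge es pq.1 pq.2) |
     pq <- allpairs pair (iota 0 5) (iota 0 5) & pq.1 < pq.2].

Definition candidate := (bool * seq nat * seq lit)%type.

Definition candidates (K : table) : seq candidate :=
  [seq (b, g, pair_lits (pattern b) g) | b <- [:: true; false], g <- placements (pattern b) K 5 [::]].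

Definition viable (K : table) (c : candidate) : bool :=
  all (fun l => ~~ known_as (K l.1.1 l.1.2) (~~ l.2)) c.2.

Definition open_lits (K : table) (c : candidate) : seq lit :=
  [seq l <- c.2 | unknown (K l.1.1 l.1.2)].

Inductive step := Found of bool & seq nat | Branch of nat & nat | Refuted | Stuck.

Definition next_step (K : table) (cands : seq candidate) : step :=
  let open := [seq (c, open_lits K c) | c <- cands] in
  if [seq o <- open | if nilp o.2 then copy_at K (pattern o.1.1.1) o.1.1.2 else false]
     is ((b, g, _), _) :: _ then Found b g
  else if clash K then Refuted
  else if [seq u <- [seq o.2 | o <- open] | ~~ nilp u] is u :: us then
    if foldl (fun a u => if size u < size a then u else a) u us is (i, j, _) :: _
    then Branch i j else Stuck
  else Stuck.

Fixpoint refute_from (fuel : nat) (K : table) (cands : seq candidate) : bool :=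
  if fuel is fuel'.+1 then
    let cands := [seq c <- cands | viable K c] in
    match next_step K cands with
    | Found b g => copy_at K (pattern b) g
    | Branch i j => refute_from fuel' (memo (assign K i j true)) cands
                    && refute_from fuel' (memo (assign K i j false)) cands
    | Refuted => clash K
    | Stuck => false
    end
  else false.

(* Every completion of the literals ls satisfying the clauses cls and the
   distinctness constraints dif contains an induced fork or dart. *)
Definition refutes (ls : seq lit) : bool :=
  let K := memo (table_of ls) in refute_from (n * n) K (candidates K).
End Certificates.

Section Soundness.
Variables (T : finType) (E : rel T).
Hypotheses (Esym : symmetric E) (Eirr : irreflexive E).
Variable f : nat -> T.

Definition holds (l : lit) : bool := E (f l.1.1) (f l.1.2) == l.2.

Definition realizes (K : table) : Prop := forall i j b, K i j = Some b -> E (f i) (f j) = b.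

Lemma realizes_table_of ls : all holds ls -> realizes (table_of ls).
Proof.
move=> /allP hls i j b; rewrite /table_of.
have hE c : ((i, j, c) \in ls) || ((j, i, c) \in ls) -> E (f i) (f j) = c.
  by case/orP=> /hls /eqP /= <-; rewrite // Esym.
case: ifP => [/hE -> [] // | _].
by case: ifP => [/hE -> [] | ].
Qed.

Lemma realizes_assign K i j b :
  realizes K -> E (f i) (f j) = b -> realizes (assign K i j b).
Proof.
move=> hK hij x y c; rewrite /assign.
case: ifP => [/orP[] /andP[/eqP-> /eqP->] [<-] // | _ /hK //].
by rewrite Esym.
Qed.

Lemma realizes_memo n K : realizes K -> realizes (memo n K).
Proof. by move=> hK i j b; rewrite memoE; apply: hK. Qed.

Lemma separated_sound n dif K i j :
  realizes K -> all (fun ij => f ij.1 != f ij.2) dif ->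
  separated n dif K i j -> f i != f j.
Proof.
move=> hK /allP hdif /or4P[/hdif // | /hdif /= | /eqP/hK | ]; first by rewrite eq_sym.
  by apply: contraTneq => ->; rewrite Eirr.
case/hasP=> k _ /and3P[]; case ik: (K i k) => [c|] //; case jk: (K j k) => [d|] // _ _.
by apply: contraNneq => eij; move: (hK _ _ _ ik) (hK _ _ _ jk); rewrite eij => -> ->.
Qed.

Lemma copy_at_sound n dif K es g :
  realizes K -> all (fun ij => f ij.1 != f ij.2) dif ->
  copy_at n dif K es g -> induced_sub (rel_of_edges es) E.
Proof.
move=> hK hdif /allP hcopy.
have hpq (p q : 'I_5) : if p == q then ~~ edge es p q
    else (K (nth 0 g p) (nth 0 g q) == Some (edge es p q))
         && separated n dif K (nth 0 g p) (nth 0 g q).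
  have p_in : val p \in iota 0 5 by rewrite mem_iota ltn_ord.
  have q_in : val q \in iota 0 5 by rewrite mem_iota ltn_ord.
  by rewrite -val_eqE; exact: (allP (hcopy _ p_in)).
exists (fun p : 'I_5 => f (nth 0 g p)); split.
  move=> p q; apply: contra_eq => /negPf neq_pq.
  by move: (hpq p q); rewrite neq_pq => /andP[_]; apply: separated_sound.
move=> p q; case: (eqVneq p q) => [<- | neq_pq].
  by move: (hpq p p); rewrite eqxx Eirr => /negPf.
by move: (hpq p q); rewrite (negPf neq_pq) => /andP[/eqP/hK].
Qed.

Lemma clash_sound cls K :
  realizes K -> all (has holds) cls -> clash cls K = false.
Proof.
move=> hK /allP hcls; apply/hasP => -[cl /hcls /hasP[l l_in hl] /allP /(_ l l_in) /eqP /hK].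
by move/eqP: hl => ->; case: (l.2).
Qed.

Hypotheses (hfork : H_free fork E) (hdart : H_free dart E).

(* In a fork- and dart-free graph no branch of a successful search is realized:
   the branching step splits on the actual adjacency of f i and f j. *)
Lemma refute_from_sound n dif cls fuel K cands :
  realizes K -> all (has holds) cls -> all (fun ij => f ij.1 != f ij.2) dif ->
  refute_from n dif cls fuel K cands -> False.
Proof.
elim: fuel K cands => [//|fuel IH] K cands hK hcls hdif /=.
case: next_step => [b g | i j | | //].
- move/(copy_at_sound hK hdif); by case: b; [apply: hfork | apply: hdart].
- case/andP=> htrue hfalse; case hij: (E (f i) (f j)).
    by apply: (IH _ _ _ hcls hdif htrue); apply/realizes_memo/realizes_assign.
  by apply: (IH _ _ _ hcls hdif hfalse); apply/realizes_memo/realizes_assign.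
- by rewrite (clash_sound hK hcls).
Qed.

Lemma refutes_sound n dif cls ls :
  refutes n dif cls ls -> all holds ls -> all (has holds) cls ->
  all (fun ij => f ij.1 != f ij.2) dif -> False.
Proof.
move=> href hls hcls hdif; apply: refute_from_sound hcls hdif href.
exact/realizes_memo/realizes_table_of.
Qed.
End Soundness.

Section Colouring.
Variables (T : finType) (E : rel T).
Hypotheses (Esym : symmetric E) (Eirr : irreflexive E).

Definition clique_num (S : {set T}) : nat :=
  \max_(W : {set T} | (W \subset S) && clique E W) #|W|.

Definition colourable_in (S : {set T}) (k : nat) : Prop :=
  exists c : T -> nat, (forall x, x \in S -> c x < k) /\
    (forall x y, x \in S -> y \in S -> E x y -> c x != c y).

Lemma cliqueP (W : {set T}) :
  reflect (forall x y, x \in W -> y \in W -> x != y -> E x y) (clique E W).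
Proof.
apply: (iffP forall_inP) => [h x y xW yW nxy | h x xW].
  by move: (h x xW) => /forall_inP /(_ y yW) /implyP; apply.
by apply/forall_inP => y yW; apply/implyP; apply: h.
Qed.

Lemma clique1 x : clique E [set x].
Proof. by apply/cliqueP => y z /set1P-> /set1P->; rewrite eqxx. Qed.

Lemma clique_num_ge (S W : {set T}) : W \subset S -> clique E W -> #|W| <= clique_num S.
Proof. by move=> WS cW; apply: (leq_bigmax_cond W); rewrite WS cW. Qed.

Lemma clique_num_mono (S1 S2 : {set T}) : S1 \subset S2 -> clique_num S1 <= clique_num S2.
Proof.
move=> S12; apply/bigmax_leqP => W /andP[WS cW]; apply: clique_num_ge cW.
exact: subset_trans S12.
Qed.

Lemma clique_num_gt0 (S : {set T}) x : x \in S -> 0 < clique_num S.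
Proof.
by move=> xS; rewrite -(cards1 x) clique_num_ge ?clique1 ?sub1set.
Qed.

Lemma clique_num_extend (S W : {set T}) u : W \subset S -> clique E W -> u \in S ->
  (forall w, w \in W -> E u w) -> #|W| < clique_num S.
Proof.
move=> WS cW uS adj.
have uW : u \notin W by apply/negP => /adj; rewrite Eirr.
have -> : #|W|.+1 = #|u |: W| by rewrite cardsU1 uW.
rewrite clique_num_ge //; first by rewrite subUset sub1set uS.
apply/cliqueP => x y /setU1P[-> | xW] /setU1P[-> | yW]; rewrite ?eqxx // => nxy.
- exact: adj.
- by rewrite Esym; apply: adj.
- by move/cliqueP: cW; apply.
Qed.

Lemma clique_num_lt (S S' : {set T}) x : S' \subset S -> x \in S ->
  (forall W : {set T}, W \subset S' -> clique E W ->
     exists2 u, u \in S & forall w, w \in W -> E u w) ->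
  clique_num S' < clique_num S.
Proof.
move=> S'S xS ext; have pos := clique_num_gt0 xS.
rewrite -(prednK pos) ltnS; apply/bigmax_leqP => W /andP[WS' cW].
have [u uS adj] := ext W WS' cW.
rewrite -ltnS prednK //; apply: clique_num_extend cW uS adj.
exact: subset_trans S'S.
Qed.

Lemma colourable_widen (S : {set T}) k k' : k <= k' -> colourable_in S k -> colourable_in S k'.
Proof. by move=> kk' [c [cb cp]]; exists c; split => // x /cb /leq_trans; apply. Qed.

Lemma colourable_add (A B : {set T}) k1 k2 :
  colourable_in A k1 -> colourable_in B k2 -> colourable_in (A :|: B) (k1 + k2).
Proof.
move=> [c1 [b1 p1]] [c2 [b2 p2]].
exists (fun x => if x \in B then k1 + c2 x else c1 x); split.
  move=> x xAB; case: ifP => [/b2 | xB]; first by rewrite ltn_add2l.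
  have xA : x \in A by case/setUP: xAB => //; rewrite xB.
  exact: ltn_addr (b1 x xA).
move=> x y /setUP xAB /setUP yAB xy; case: ifP => xB; case: ifP => yB.
- by rewrite eqn_add2l p2.
- have yA : y \in A by case: yAB => //; rewrite yB.
  by rewrite eq_sym neq_ltn ltn_addr ?b1.
- have xA : x \in A by case: xAB => //; rewrite xB.
  by rewrite neq_ltn ltn_addr ?b1.
- have xA : x \in A by case: xAB => //; rewrite xB.
  have yA : y \in A by case: yAB => //; rewrite yB.
  exact: p1.
Qed.

Lemma colourable_closed (S T0 : {set T}) k : T0 \subset S ->
  (forall z w, z \in T0 -> w \in S -> E z w -> w \in T0) ->
  colourable_in T0 k -> colourable_in (S :\: T0) k -> colourable_in S k.
Proof.
move=> /subsetP T0S closed [c1 [b1 p1]] [c2 [b2 p2]].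
exists (fun x => if x \in T0 then c1 x else c2 x); split.
  by move=> x xS; case: ifP => [/b1 // | xT0]; apply: b2; rewrite in_setD xT0.
move=> x y xS yS xy; case: ifP => xT0; case: ifP => yT0.
- exact: p1.
- by rewrite (closed x y xT0 yS xy) in yT0.
- by rewrite (closed y x yT0 xS (etrans (Esym _ _) xy)) in xT0.
- by apply: p2; rewrite // in_setD ?xT0 ?yT0.
Qed.

(* B induces a disjoint union of cliques: adjacency is transitive on B. *)
Definition cluster (B : {set T}) : Prop :=
  forall x y z, x \in B -> y \in B -> z \in B -> E x y -> E y z -> x != z -> E x z.

(* In a cluster, colour each vertex by its rank inside its clique. *)
Lemma cluster_colourable (B : {set T}) k : cluster B ->
  (forall W : {set T}, W \subset B -> clique E W -> #|W| <= k) -> colourable_in B k.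
Proof.
move=> clB small.
pose blk x := [set y in B | (y == x) || E x y].
pose rank x := #|[set y in blk x | enum_rank y < enum_rank x]|.
have blk_self x : x \in B -> x \in blk x by move=> xB; rewrite inE xB eqxx.
have blkE x y : x \in B -> y \in B -> E x y -> blk x = blk y.
  have sub x' y' z : x' \in B -> y' \in B -> E x' y' -> z \in blk x' -> z \in blk y'.
    move=> x'B y'B x'y' /setIdP[zB /orP[/eqP-> | x'z]]; first by rewrite inE x'B Esym x'y' orbT.
    rewrite inE zB; case: (eqVneq z y') => //= zy'.
    by apply: (clB y' x' z y'B x'B zB _ x'z); rewrite 1?Esym // eq_sym.
  by move=> xB yB xy; apply/setP => z; apply/idP/idP; apply: sub; rewrite // Esym.
have blk_clique x : x \in B -> clique E (blk x).
  move=> xB; apply/cliqueP => y z /setIdP[yB /orP[/eqP-> | xy]] /setIdP[zB /orP[/eqP-> | xz]];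
    rewrite ?eqxx // => nyz; first by rewrite Esym.
  by apply: (clB y x z yB xB zB _ xz nyz); rewrite Esym.
exists rank; split.
  move=> x xB; apply: leq_trans (small _ _ (blk_clique x xB)); last first.
    by apply/subsetP => y /setIdP[].
  apply: proper_card; apply/properP; split; first by apply/subsetP => y /setIdP[].
  by exists x; rewrite ?blk_self // inE ltnn andbF.
have rank_lt x y : x \in B -> y \in B -> E x y -> enum_rank x < enum_rank y -> rank x < rank y.
  move=> xB yB xy lt_xy; apply: proper_card; apply/properP; split.
    apply/subsetP => z /setIdP[]; rewrite (blkE x y) // => zy lt_zx.
    by rewrite inE zy (ltn_trans lt_zx lt_xy).
  exists x; last by rewrite inE ltnn andbF.
  by rewrite inE -(blkE x y) // blk_self.
move=> x y xB yB xy; case: (ltngtP (enum_rank x) (enum_rank y)) => [lt_xy | lt_yx | /val_inj/enum_rank_inj eq_xy].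
- by rewrite neq_ltn rank_lt.
- by rewrite neq_ltn (rank_lt y x) ?orbT // Esym.
- by rewrite eq_xy Eirr in xy.
Qed.

(* Removing a cluster B lowers the clique number by at least one, and B needs at most
   clique_num S colours, so (clique_num S - 1)^2 + clique_num S <= clique_num S ^ 2
   colours suffice for S. *)
Lemma colourable_remove_cluster (S B : {set T}) : B \subset S -> cluster B ->
  clique_num (S :\: B) < clique_num S ->
  colourable_in (S :\: B) (clique_num (S :\: B) ^ 2) -> colourable_in S (clique_num S ^ 2).
Proof.
move=> BS clB lt_B colSB; have pos : 0 < clique_num S := leq_ltn_trans (leq0n _) lt_B.
rewrite -{1}(setID S B) (setIidPr BS).
apply: (colourable_widen (k := clique_num S + (clique_num S).-1 ^ 2)).
  by move: (clique_num S) pos => m m_gt0; case: m m_gt0 => // m _ /=; nia.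
apply: colourable_add.
  apply: (cluster_colourable clB) => W WB cW.
  by apply: clique_num_ge cW; apply: subset_trans WB BS.
apply: colourable_widen colSB.
have le : clique_num (S :\: B) <= (clique_num S).-1 by rewrite -ltnS prednK.
exact: leq_mul.
Qed.

Definition nbr (S : {set T}) (u : T) : {set T} := [set y in S | E u y].

Lemma colourable_add_vertex (S : {set T}) u k : u \in S -> #|nbr S u| < k ->
  colourable_in (S :\ u) k -> colourable_in S k.
Proof.
move=> uS small [c [cb cp]].
have [i lt_ik fresh] : exists2 i, i < k & i \notin [seq c y | y <- enum (nbr S u)].
  have [/existsP[i fresh] | /existsPn used] :=
    boolP [exists i : 'I_k, val i \notin [seq c y | y <- enum (nbr S u)]]; first by exists i.
  have : k <= #|nbr S u|.
    rewrite cardE -(size_map c) -[k in k <= _](size_iota 0); apply: uniq_leq_size; first exact: iota_uniq.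
    by move=> i; rewrite mem_iota add0n => lt_ik; move: (used (Ordinal lt_ik)); rewrite negbK.
  by rewrite leqNgt small.
exists (fun x => if x == u then i else c x); split.
  by move=> x xS; case: eqP => // /eqP xu; apply: cb; rewrite in_setD1 xu.
have fresh_nbr y : y \in S -> E u y -> i != c y.
  by move=> yS uy; apply: contraNneq fresh => ->; apply: map_f; rewrite mem_enum inE yS.
move=> x y xS yS xy; case: (eqVneq x u) => [exu | xu]; case: (eqVneq y u) => [eyu | yu].
- by rewrite exu eyu Eirr in xy.
- by apply: fresh_nbr; rewrite -?exu.
- by rewrite eq_sym; apply: fresh_nbr; rewrite // Esym -eyu.
- by apply: cp; rewrite // in_setD1 ?xu ?yu.
Qed.

Definition stable_nbr3 (S : {set T}) (u : T) : bool :=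
  [exists a in nbr S u, exists b in nbr S u, exists c in nbr S u,
    [&& a != b, a != c, b != c, ~~ E a b, ~~ E a c & ~~ E b c]].

(* Ramsey-type bound: a set without stable triples whose cliques have at most k
   vertices has at most k (k + 2) vertices (induct on k, splitting N along the
   neighbourhood of one vertex; its non-neighbours form a clique). *)
Lemma no_stable3_card k (N : {set T}) :
  (forall x y z, x \in N -> y \in N -> z \in N -> x != y -> x != z -> y != z ->
     [|| E x y, E x z | E y z]) ->
  (forall W : {set T}, W \subset N -> clique E W -> #|W| <= k) -> #|N| <= k * k.+2.
Proof.
elim: k N => [|k IH] N no3 small; have [-> | [y yN]] := set_0Vmem N; rewrite ?cards0 //.
  by have := small [set y]; rewrite cards1 sub1set yN => /(_ isT (clique1 y)).
pose N1 := [set z in N | E y z]; pose N2 := [set z in N | (z != y) && ~~ E y z].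
have N_split : N \subset y |: (N1 :|: N2).
  apply/subsetP => z zN; rewrite !inE zN /=.
  by case: eqP => //= _; case: (E y z).
have N2_small : #|N2| <= k.+1.
  apply: small; first by apply/subsetP => z /setIdP[].
  apply/cliqueP => a b /setIdP[aN /andP[ay nya]] /setIdP[bN /andP[by_ nyb]] nab.
  have := no3 y a b yN aN bN; rewrite eq_sym ay eq_sym by_ nab => /(_ isT isT isT).
  by rewrite (negPf nya) (negPf nyb).
have N1_small : #|N1| <= k * k.+2.
  apply: IH => [a b c /setIdP[aN _] /setIdP[bN _] /setIdP[cN _] | W WN1 cW]; first exact: no3.
  have WN : forall w, w \in W -> (w \in N) && E y w by move=> w /(subsetP WN1); rewrite inE.
  rewrite -ltnS; apply: (@leq_trans (clique_num (y |: W))).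
    apply: (clique_num_extend (u := y) _ cW) => [| | w /WN /andP[] //].
      exact: subsetUr.
    exact: setU11.
  apply/bigmax_leqP => W' /andP[W'yW cW']; apply: small cW'.
  apply: subset_trans W'yW _; rewrite subUset sub1set yN.
  by apply/subsetP => w /WN /andP[].
apply: (leq_trans (subset_leq_card N_split)); rewrite cardsU1.
apply: (@leq_trans (1 + (#|N1| + #|N2|))).
  by rewrite leq_add ?leq_b1 // (leq_card_setU N1 N2).1.
have := leq_add N1_small N2_small; move: (#|N1| + #|N2|) => m; nia.
Qed.

(* A vertex whose neighbourhood has no stable triple has fewer than
   clique_num S ^ 2 neighbours: a clique in nbr S u extends by u. *)
Lemma nbr_small (S : {set T}) u : u \in S -> ~~ stable_nbr3 S u ->
  #|nbr S u| < clique_num S ^ 2.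
Proof.
move=> uS no3; have pos := clique_num_gt0 uS.
have : #|nbr S u| <= (clique_num S).-1 * (clique_num S).-1.+2.
  apply: no_stable3_card => [x y z xN yN zN nxy nxz nyz | W WN cW].
    apply: contraNT no3 => h; apply/exists_inP; exists x => //; apply/exists_inP; exists y => //.
    apply/exists_inP; exists z => //; rewrite nxy nxz nyz /=.
    by move: h; case: (E x y); case: (E x z); case: (E y z).
  rewrite -ltnS prednK //; apply: (clique_num_extend _ cW uS).
    by apply: subset_trans WN _; apply/subsetP => y /setIdP[].
  by move=> w /(subsetP WN) /setIdP[].
by move/leq_ltn_trans; apply; case: (clique_num S) pos => // m _ /=; nia.
Qed.
End Colouring.

Ltac realize := rewrite /holds /= ?eqb_id ?eqbF_neg ?andbT ?orbF ?orbA;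
  repeat (apply/andP; split); done.

Section ForbiddenConfigurations.
Variables (T : finType) (E : rel T).
Hypotheses (Esym : symmetric E) (Eirr : irreflexive E).
Hypotheses (hfork : H_free fork E) (hdart : H_free dart E).

Lemma triple_nbrs_transitive (v a b c y1 y2 y3 : T) :
  E v a -> E v b -> E v c -> ~~ E a b -> ~~ E a c -> ~~ E b c ->
  a != b -> a != c -> b != c ->
  E v y1 -> E v y2 -> E v y3 ->
  ~~ E y1 a || ~~ E y1 b || ~~ E y1 c ->
  ~~ E y2 a || ~~ E y2 b || ~~ E y2 c ->
  ~~ E y3 a || ~~ E y3 b || ~~ E y3 c ->
  E y1 y2 -> E y2 y3 -> y1 != y3 -> E y1 y3.
Proof.
move=> *; apply/negPn/negP => ?.
apply: (refutes_sound Esym Eirr (f := nth v [:: v; a; b; c; y1; y2; y3]) hfork hdart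
  (n := 7) (dif := [:: (1, 2); (1, 3); (2, 3); (4, 6)])
  (cls := [seq [:: (y, 1, false); (y, 2, false); (y, 3, false)] | y <- [:: 4; 5; 6]])
  (ls := [:: (0, 1, true); (0, 2, true); (0, 3, true); (1, 2, false); (1, 3, false);
             (2, 3, false); (0, 4, true); (0, 5, true); (0, 6, true); (4, 5, true);
             (5, 6, true); (4, 6, false)])); [by vm_compute | realize ..].
Qed.

Lemma far_nbr_sees_two (v a b c y x : T) :
  E v a -> E v b -> E v c -> ~~ E a b -> ~~ E a c -> ~~ E b c ->
  a != b -> a != c -> b != c ->
  E v y -> ~~ E y a || ~~ E y b || ~~ E y c -> E x y -> ~~ E x v -> E x a || E x b.
Proof.
move=> *; apply/negPn/negP => /norP[? ?].
apply: (refutes_sound Esym Eirr (f := nth v [:: v; a; b; c; y; x]) hfork hdart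
  (n := 6) (dif := [:: (1, 2); (1, 3); (2, 3)])
  (cls := [:: [:: (4, 1, false); (4, 2, false); (4, 3, false)]])
  (ls := [:: (0, 1, true); (0, 2, true); (0, 3, true); (1, 2, false); (1, 3, false);
             (2, 3, false); (0, 4, true); (5, 4, true); (5, 0, false); (5, 1, false);
             (5, 2, false)])); [by vm_compute | realize ..].
Qed.

Lemma far_edge_no_triple (v a b c x x' s1 s2 s3 : T) :
  E v a -> E v b -> E v c -> ~~ E a b -> ~~ E a c -> ~~ E b c ->
  a != b -> a != c -> b != c ->
  ~~ E x v -> ~~ E x' v -> E x x' -> E x b -> E x c -> ~~ E x a -> E x' a -> E x' c -> ~~ E x' b ->
  E x s1 -> E x s2 -> E x s3 -> ~~ E s1 s2 -> ~~ E s1 s3 -> ~~ E s2 s3 ->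
  s1 != s2 -> s1 != s3 -> s2 != s3 -> False.
Proof.
move=> *.
apply: (refutes_sound Esym Eirr (f := nth v [:: v; a; b; c; x; x'; s1; s2; s3]) hfork hdart
  (n := 9) (dif := [:: (1, 2); (1, 3); (2, 3); (6, 7); (6, 8); (7, 8)]) (cls := [::])
  (ls := [:: (0, 1, true); (0, 2, true); (0, 3, true); (1, 2, false); (1, 3, false);
             (2, 3, false); (4, 0, false); (5, 0, false); (4, 5, true); (4, 2, true);
             (4, 3, true); (4, 1, false); (5, 1, true); (5, 3, true); (5, 2, false);
             (4, 6, true); (4, 7, true); (4, 8, true); (6, 7, false); (6, 8, false);
             (7, 8, false)])); [by vm_compute | realize ..].
Qed.

Lemma far_path_transitive (x1 p q z1 z2 z3 : T) :
  E x1 p -> E x1 q -> ~~ E p q -> p != q -> E z2 x1 ->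
  ~~ E z1 p -> ~~ E z1 q -> ~~ E z2 p -> ~~ E z2 q -> ~~ E z3 p -> ~~ E z3 q ->
  E z1 z2 -> E z2 z3 -> z1 != z3 -> E z1 z3.
Proof.
move=> *; apply/negPn/negP => ?.
apply: (refutes_sound Esym Eirr (f := nth x1 [:: x1; p; q; z1; z2; z3]) hfork hdart
  (n := 6) (dif := [:: (1, 2); (3, 5)]) (cls := [::])
  (ls := [:: (0, 1, true); (0, 2, true); (1, 2, false); (4, 0, true); (3, 1, false);
             (3, 2, false); (4, 1, false); (4, 2, false); (5, 1, false); (5, 2, false);
             (3, 4, true); (4, 5, true); (3, 5, false)])); [by vm_compute | realize ..].
Qed.

(* A dart: if r ~ v, a, b, z with v ~ a, b, a !~ b and z !~ a, b, then z ~ v. *)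
Lemma dart_closure (r v a b z : T) :
  E r v -> E r a -> E r b -> E r z -> E v a -> E v b -> ~~ E a b -> a != b ->
  ~~ E z a -> ~~ E z b -> E z v.
Proof.
move=> *; apply/negPn/negP => ?.
apply: (refutes_sound Esym Eirr (f := nth r [:: r; v; a; b; z]) hfork hdart
  (n := 5) (dif := [:: (2, 3)]) (cls := [::])
  (ls := [:: (0, 1, true); (0, 2, true); (0, 3, true); (0, 4, true); (1, 2, true);
             (1, 3, true); (2, 3, false); (4, 2, false); (4, 3, false); (4, 1, false)]));
  [by vm_compute | realize ..].
Qed.

(* A fork: if x1 ~ p, q with p !~ q, and x1 - x0 - z is a path avoiding p, q,
   then z ~ x1. *)
Lemma fork_closure (x1 p q x0 z : T) :
  E x1 p -> E x1 q -> ~~ E p q -> p != q -> E x0 x1 -> E z x0 ->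
  ~~ E x0 p -> ~~ E x0 q -> ~~ E z p -> ~~ E z q -> E z x1.
Proof.
move=> *; apply/negPn/negP => ?.
apply: (refutes_sound Esym Eirr (f := nth x1 [:: x1; p; q; x0; z]) hfork hdart
  (n := 5) (dif := [:: (1, 2)]) (cls := [::])
  (ls := [:: (0, 1, true); (0, 2, true); (1, 2, false); (3, 0, true); (4, 3, true);
             (3, 1, false); (3, 2, false); (4, 1, false); (4, 2, false); (4, 0, false)]));
  [by vm_compute | realize ..].
Qed.
End ForbiddenConfigurations.

Section Decomposition.
Variables (T : finType) (E : rel T).
Hypotheses (Esym : symmetric E) (Eirr : irreflexive E).
Hypotheses (hfork : H_free fork E) (hdart : H_free dart E).

Section AroundTriple.
Variables (S : {set T}) (v a b c : T).
Hypotheses (aS : a \in S) (bS : b \in S) (cS : c \in S) (va : E v a) (vb : E v b) (vc : E v c).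
Hypotheses (eab : ~~ E a b) (eac : ~~ E a c) (ebc : ~~ E b c).
Hypotheses (nab : a != b) (nac : a != c) (nbc : b != c).

Definition K := [set y in nbr E S v | ~~ [&& E y a, E y b & E y c]].
Definition R := nbr E S v :\: K.
Definition M := [set x in S | (x != v) && ~~ E v x].
Definition M1 := [set x in M | [exists y in K, E x y]].
Definition M0 := [set x in M :\: M1 | [exists y in M1, E x y]].
Definition Z := M :\: (M1 :|: M0).

Lemma inK y : (y \in K) = [&& y \in S, E v y & ~~ E y a || ~~ E y b || ~~ E y c].
Proof. by rewrite !inE -andbA !negb_and orbA. Qed.

Lemma inR y : y \in R -> [/\ y \in S, E v y, E y a, E y b & E y c].
Proof.
rewrite in_setD inK inE => /andP[+ /andP[yS vy]]; rewrite yS vy /=.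
by case: (E y a); case: (E y b); case: (E y c).
Qed.

Lemma inM x : (x \in M) = [&& x \in S, x != v & ~~ E v x].
Proof. by rewrite inE. Qed.

Lemma abc_in_K : [/\ a \in K, b \in K & c \in K].
Proof. by rewrite !inK aS bS cS va vb vc !Eirr /= !orbT. Qed.

Lemma vertex_cases w : w \in S -> [\/ w = v, w \in K, w \in R | w \in M].
Proof.
move=> wS; case: (eqVneq w v) => [-> | wv]; first by constructor 1.
case vw: (E v w); last by constructor 4; rewrite inM wS wv vw.
by case wK: (w \in K); [constructor 2 | constructor 3; rewrite in_setD wK !inE wS vw].
Qed.

Lemma M_K_nonadj x y : x \in M -> x \notin M1 -> y \in K -> ~~ E x y.
Proof. by move=> xM xM1 yK; apply: contra xM1 => xy; rewrite inE xM; apply/exists_inP; exists y. Qed.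

Lemma inM0 x : x \in M0 -> [/\ x \in M, x \notin M1 & exists2 y, y \in M1 & E x y].
Proof. by rewrite inE in_setD => /andP[/andP[-> ->] /exists_inP]. Qed.

Lemma to_M0 x y : x \in M -> x \notin M1 -> y \in M1 -> E x y -> x \in M0.
Proof. by move=> xM xM1 yM1 xy; rewrite inE in_setD xM xM1; apply/exists_inP; exists y. Qed.

Lemma inZ z : z \in Z -> [/\ z \in M, z \notin M1 & z \notin M0].
Proof. by rewrite in_setD in_setU negb_or => /andP[/andP[-> ->] ->]. Qed.

Lemma M0_K_nonadj x y : x \in M0 -> y \in K -> ~~ E x y.
Proof. by case/inM0 => xM xM1 _; apply: M_K_nonadj. Qed.

Lemma M1_two x : x \in M1 -> [/\ E x a || E x b, E x a || E x c & E x b || E x c].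
Proof.
rewrite inE inM => /andP[/and3P[_ _ nvx] /exists_inP[y]].
rewrite inK => /and3P[_ vy ymiss] xy; have nxv : ~~ E x v by rewrite Esym.
have sees p q r : E v p -> E v q -> E v r -> ~~ E p q -> ~~ E p r -> ~~ E q r ->
    p != q -> p != r -> q != r -> ~~ E y p || ~~ E y q || ~~ E y r -> E x p || E x q.
  by move=> *; apply: (far_nbr_sees_two Esym Eirr hfork hdart (v := v) (y := y) (c := r)).
have ymiss1 : ~~ E y a || ~~ E y c || ~~ E y b.
  by move: ymiss; case: (E y a); case: (E y b); case: (E y c).
have ymiss2 : ~~ E y b || ~~ E y c || ~~ E y a.
  by move: ymiss; case: (E y a); case: (E y b); case: (E y c).
split; [apply: (sees a b c) | apply: (sees a c b) | apply: (sees b c a)];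
  by [| rewrite Esym | rewrite eq_sym].
Qed.

Lemma M1_stable_pair x : x \in M1 ->
  exists p q, [/\ p \in K, q \in K, p != q, ~~ E p q & E x p && E x q].
Proof.
have [aK bK cK] := abc_in_K.
case/M1_two => xab xac xbc; case xa: (E x a); case xb: (E x b).
- by exists a, b; rewrite xa xb.
- by exists a, c; rewrite xb /= in xbc; rewrite xa xbc.
- by exists b, c; rewrite xa /= in xac; rewrite xb xac.
- by rewrite xa xb in xab.
Qed.

Lemma Z_closed z w : z \in Z -> w \in S -> E z w -> w \in Z.
Proof.
case/inZ=> zM zM1 zM0 wS zw; have [aK bK _] := abc_in_K.
have [zS _ nvz] : [/\ z \in S, z != v & ~~ E v z] by apply/and3P; rewrite -inM.
have za := M_K_nonadj zM zM1 aK; have zb := M_K_nonadj zM zM1 bK.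
case: (vertex_cases wS) => [wv | wK | wR | wM].
- by move: zw; rewrite wv Esym (negPf nvz).
- by move: zw; rewrite (negPf (M_K_nonadj zM zM1 wK)).
- case/inR: wR => _ vw wa wb _.
  have zv : E z v.
    by apply: (dart_closure Esym Eirr hfork hdart (r := w) (a := a) (b := b)); by [| rewrite Esym].
  by rewrite Esym zv in nvz.
case wM1: (w \in M1); first by rewrite (to_M0 zM zM1 wM1 zw) in zM0.
case wM0: (w \in M0); last by rewrite in_setD in_setU wM1 wM0 wM.
case/inM0: (wM0) => _ _ [x1 x1M1 wx1].
have [p [q [pK qK npq epq /andP[x1p x1q]]]] := M1_stable_pair x1M1.
have zx1 : E z x1.
  apply: (fork_closure Esym Eirr hfork hdart x1p x1q epq npq wx1) => //;
    by [rewrite Esym | apply: M0_K_nonadj | apply: M_K_nonadj].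
by rewrite (to_M0 zM zM1 x1M1 zx1) in zM0.
Qed.

(* K and M0 are non-adjacent clusters, so their union is a cluster. *)
Lemma K_M0_cluster : cluster E (K :|: M0).
Proof.
move=> x y z; rewrite !in_setU => xB yB zB xy yz nxz.
case: (boolP (y \in K)) => yK.
  have inK' w : w \in K :|: M0 -> E w y -> w \in K.
    by rewrite in_setU => /orP[// | /M0_K_nonadj/(_ yK)/negPf ->].
  have /inK'/(_ xy) xK : x \in K :|: M0 by rewrite in_setU.
  have /inK' zK : z \in K :|: M0 by rewrite in_setU.
  have {}zK := zK (etrans (Esym _ _) yz).
  move: xK yK zK; rewrite !inK => /and3P[_ vx xm] /and3P[_ vy ym] /and3P[_ vz zm].
  exact: (triple_nbrs_transitive Esym Eirr hfork hdart va vb vc eab eac ebc nab nac nbc vx vy vz).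
have yM0 : y \in M0 by case/orP: yB => //; rewrite (negPf yK).
have inM0' w : w \in K :|: M0 -> E y w -> w \in M0.
  by rewrite in_setU => /orP[/(M0_K_nonadj yM0)/negPf -> | //].
have xM0 : x \in M0 by apply: inM0'; rewrite ?in_setU // Esym.
have zM0 : z \in M0 by apply: inM0'; rewrite ?in_setU.
case/inM0: (yM0) => _ _ [x1 x1M1 yx1].
have [p [q [pK qK npq epq /andP[x1p x1q]]]] := M1_stable_pair x1M1.
apply: (far_path_transitive Esym Eirr hfork hdart x1p x1q epq npq yx1) => //;
  by apply: M0_K_nonadj.
Qed.

Lemma outside_K_M0 w : w \in S :\: (K :|: M0) -> [\/ w = v, w \in R, w \in M1 | w \in Z].
Proof.
rewrite in_setD in_setU negb_or => /andP[/andP[wK wM0] wS].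
case: (vertex_cases wS) => [-> | wK' | wR | wM]; first by constructor 1.
- by rewrite wK' in wK.
- by constructor 2.
case wM1: (w \in M1); first by constructor 3.
by constructor 4; rewrite in_setD in_setU wM1 (negPf wM0) wM.
Qed.

(* If Z is empty, every clique outside K :|: M0 extends by a or by b: otherwise two
   adjacent vertices of M1 would form, with v, a, b, c and a stable triple in the
   neighbourhood of one of them, a forbidden configuration. *)
Lemma clique_num_drop : (forall u, u \in S -> stable_nbr3 E S u) -> Z = set0 ->
  clique_num E (S :\: (K :|: M0)) < clique_num E S.
Proof.
move=> stable Z0; have [aK bK _] := abc_in_K.
apply: (clique_num_lt Esym Eirr (x := a)) => // [|W /subsetP WS cW]; first exact: subsetDl.
have Wcases w : w \in W -> [\/ w = v, w \in R | w \in M1].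
  by move=> /WS /outside_K_M0 [-> | | | ]; [constructor 1 | constructor 2 | constructor 3 | rewrite Z0 in_set0].
have M1_far x : x \in M1 -> ~~ E x v by rewrite !inE Esym => /andP[/and3P[]].
have [vW | vW] := boolP (v \in W).
  exists a => // w wW; case: (eqVneq w v) => [-> | wv]; first by rewrite Esym.
  have vw : E v w by move/cliqueP: cW; apply; rewrite // eq_sym.
  case: (Wcases w wW) => [/eqP | /inR[_ _ wa _ _] | /M1_far]; first by rewrite (negPf wv).
    by rewrite Esym.
  by rewrite Esym vw.
have W_M1 w : w \in W -> ~~ E a w || ~~ E b w -> w \in M1.
  move=> wW miss; case: (Wcases w wW) => [wv | /inR[_ _ wa wb _] | //]; first by rewrite -wv wW in vW.
  by rewrite !(Esym _ w) wa wb in miss.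
have [/forall_inP Wa | /forall_inPn[x xW xa]] := boolP [forall w in W, E a w]; first by exists a.
have [/forall_inP Wb | /forall_inPn[y yW yb]] := boolP [forall w in W, E b w]; first by exists b.
have xM1 : x \in M1 by rewrite W_M1 ?xa.
have yM1 : y \in M1 by rewrite W_M1 ?yb ?orbT.
have [xab xac _] := M1_two xM1; have [yab _ ybc] := M1_two yM1.
rewrite (Esym x a) (negPf xa) /= in xab xac; rewrite (Esym y b) (negPf yb) /= ?orbF in yab ybc.
have xy : E x y.
  by move/cliqueP: cW; apply => //; apply: contraNneq xa => ->; rewrite Esym.
have xS : x \in S by move: (WS x xW); rewrite in_setD => /andP[].
case/exists_inP: (stable x xS) => s1 /setIdP[_ x1] /exists_inP[s2 /setIdP[_ x2]].
case/exists_inP=> s3 /setIdP[_ x3] /and3P[n12 n13 /and4P[n23 e12 e13 e23]].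
exfalso; apply: (far_edge_no_triple Esym Eirr hfork hdart va vb vc eab eac ebc nab nac nbc
          (M1_far _ xM1) (M1_far _ yM1) xy xab xac _ yab ybc _ x1 x2 x3 e12 e13 e23 n12 n13 n23);
  by rewrite Esym.
Qed.
End AroundTriple.

Lemma decomposition (S : {set T}) v : v \in S -> (forall u, u \in S -> stable_nbr3 E S u) ->
  (exists T0 : {set T}, [/\ T0 \subset S, T0 != set0, v \notin T0 &
      forall z w, z \in T0 -> w \in S -> E z w -> w \in T0])
  \/ (exists B : {set T}, [/\ B \subset S, cluster E B & clique_num E (S :\: B) < clique_num E S]).
Proof.
move=> vS stable.
case/exists_inP: (stable v vS) => a /setIdP[aS va] /exists_inP[b /setIdP[bS vb]].
case/exists_inP=> c /setIdP[cS vc] /and3P[nab nac /and4P[nbc eab eac ebc]].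
have M_sub : M S v \subset S by apply/subsetP => x; rewrite inM => /andP[].
have [Z0 | /set0Pn[z zZ]] := eqVneq (Z S v a b c) set0.
  right; exists (K S v a b c :|: M0 S v a b c); split.
  - rewrite subUset; apply/andP; split; apply/subsetP => x.
      by rewrite inK => /andP[].
    by case/inM0 => /(subsetP M_sub).
  - exact: (K_M0_cluster aS bS cS va vb vc eab eac ebc nab nac nbc).
  - exact: (clique_num_drop aS bS cS va vb vc eab eac ebc nab nac nbc).
left; exists (Z S v a b c); split.
- by apply/subsetP => x /inZ[/(subsetP M_sub)].
- by apply/set0Pn; exists z.
- by apply/negP => /inZ[]; rewrite inM eqxx andbF.
- exact: (Z_closed aS bS cS va vb vc eab eac ebc nab nac nbc).
Qed.
End Decomposition.

Section MainInduction.
Variables (T : finType) (E : rel T).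
Hypotheses (Esym : symmetric E) (Eirr : irreflexive E).
Hypotheses (hfork : H_free fork E) (hdart : H_free dart E).

Lemma colourable_sq_widen (S S' : {set T}) : S' \subset S ->
  colourable_in E S' (clique_num E S' ^ 2) -> colourable_in E S' (clique_num E S ^ 2).
Proof.
move=> S'S; apply: colourable_widen.
by have le := clique_num_mono E S'S; apply: leq_mul.
Qed.

Lemma colourable_clique_sq (S : {set T}) : colourable_in E S (clique_num E S ^ 2).
Proof.
have [n] := ubnP #|S|; elim: n S => // n IH S; rewrite ltnS => le_Sn.
have IH' (S' : {set T}) : S' \proper S -> colourable_in E S' (clique_num E S' ^ 2).
  by move=> /proper_card lt_S'S; apply: IH; apply: leq_trans le_Sn.
have [-> | [v vS]] := set_0Vmem S; first by exists (fun _ => 0); split => x; rewrite inE.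
have [/exists_inP[u uS no3] | /exists_inPn every3] := boolP [exists u in S, ~~ stable_nbr3 E S u].
  apply: (colourable_add_vertex Esym Eirr uS (nbr_small Esym Eirr uS no3)).
  apply: colourable_sq_widen; first exact: subsetDl.
  by apply: IH'; rewrite properD1.
have {}every3 u : u \in S -> stable_nbr3 E S u by move/every3/negPn.
case: (decomposition Esym Eirr hfork hdart vS every3) => [[T0 [T0S T0n0 vT0 closed]] | [B [BS clB lt_B]]].
  have [z zT0] := set0Pn _ T0n0.
  apply: (colourable_closed Esym T0S closed).
    by apply: (colourable_sq_widen T0S); apply: IH'; apply/properP; split => //; exists v.
  apply: (colourable_sq_widen (subsetDl S T0)); apply: IH'.
  by apply/properP; split; [exact: subsetDl | exists z; rewrite ?inE ?zT0 ?(subsetP T0S)].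
apply: (colourable_remove_cluster Esym Eirr BS clB lt_B); apply: IH'.
have [x xB] : exists x, x \in B.
  by apply/set0Pn; apply: contraTneq lt_B => ->; rewrite setD0 ltnn.
by apply/properP; split; [exact: subsetDl | exists x; rewrite ?inE ?xB ?(subsetP BS)].
Qed.
End MainInduction.

Lemma chi_le (T : finType) (E : rel T) (Eirr : irreflexive E) k :
  colourable_in E [set: T] k -> chi Eirr <= k.
Proof.
move=> [c [c_lt c_ok]].
have col : colorable E k.
  apply/existsP; exists [ffun x => Ordinal (c_lt x (in_setT x))].
  apply/forallP => x; apply/forallP => y; apply/implyP => xy; rewrite !ffunE.
  exact: c_ok.
by rewrite /chi; case: ex_minnP => m _; apply.
Qed.

Theorem corollary3p7 (T : finType) (E : rel T)
  (Esym : symmetric E) (Eirr : irreflexive E) :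
  H_free fork E -> H_free dart E ->
  chi Eirr <= omega E ^ 2.
Proof.
move=> hfork hdart; apply: chi_le.
have -> : omega E = clique_num E [set: T] by apply: eq_bigl => W; rewrite subsetT.
exact: colourable_clique_sq.
Qed.
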